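(* Let $\hat{A}\in\{0,1\}^{n\times n}$ be symmetric with exactly $m$ non-zero entries and no zero row, $d_i=\sum_j\hat{A}_{ij}$. Let $\overline{F}_1,\dots,\overline{F}_\gamma\in\mathbb{R}^{n\times n}$ be symmetric block matrices, where $\overline{F}_t$ is constant on each block $B\times B'$ with $B,B'$ parts of a partition $\mathcal{B}_t$ of $V=\{1,\dots,n\}$. Let $b$ be the greatest lower bound (common refinement) of $\mathcal{B}_1,\dots,\mathcal{B}_\gamma$, i.e. the partition whose parts are the nonempty intersections $P_1\cap\dots\cap P_\gamma$ with $P_t\in\mathcal{B}_t$, and let $|b|$ be its number of parts. Set $c_t=\sum_{a,b'}(\overline{F}_t)_{ab'}\hat{A}_{ab'}$ and $$L(\lambda_1,\dots,\lambda_n,\mu_1,\dots,\mu_\gamma)=\sum_{a,b'}\log\Bigl(1+\exp\bigl(\lambda_a+\textstyle\sum_{t=1}^\gamma\mu_t(\overline{F}_t)_{ab'}\bigr)\Bigr)-\sum_a d_a\lambda_a-\sum_{t=1}^\gamma c_t\mu_t .$$ Let $W$ be the subspace of parameter vectors with $\lambda_a=\lambda_{a'}$ whenever $a,a'$ lie in the same part of $b$ and $d_a=d_{a'}$. Then $\dim W\le\sqrt{2|b|m}+\gamma$, $\inf_W L=\inf L$, and every minimizer of $L$ on $W$ is a global minimizer of $L$.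
   Context: This is the MaxEnt Lagrange dual with one constraint per node degree (feature matrix with ones in row $a$, multiplier $\lambda_a$) and one global constraint per block-approximated feature matrix $\overline{F}_t$ (multiplier $\mu_t$). A partition $\mathcal{B}$ refines $\mathcal{B}'$ if each part of $\mathcal{B}$ is contained in a part of $\mathcal{B}'$; the greatest lower bound of a set of partitions is their coarsest common refinement. *)

From Stdlib Require Import Reals Lra Lia.
Open Scope R_scope.

Fixpoint rsum (n : nat) (f : nat -> R) : R :=
  match n with
  | O => 0
  | S k => rsum k f + f k
  end.

Fixpoint ncount (n : nat) (P : nat -> bool) : nat :=
  match n with
  | O => O
  | S k => (ncount k P + (if P k then 1 else 0))%nat
  end.

(* A partition of V = {0,...,n-1} is encoded by a block-labelling function
   part : nat -> nat (a ~ a' iff part a = part a').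
   parts : nat -> (nat -> nat) gives the partitions B_1..B_gamma (indices t < gamma). *)

Definition glb_rel (gamma : nat) (parts : nat -> nat -> nat) (a a' : nat) : Prop :=
  forall t, (t < gamma)%nat -> parts t a = parts t a'.

Definition glb_relb (gamma : nat) (parts : nat -> nat -> nat) (a a' : nat) : bool :=
  (fix go (t : nat) : bool :=
     match t with
     | O => true
     | S k => andb (Nat.eqb (parts k a) (parts k a')) (go k)
     end) gamma.

(* number of parts |b| of the glb partition on {0..n-1}: count the
   least elements of each part *)
Definition glb_card (n gamma : nat) (parts : nat -> nat -> nat) : nat :=
  ncount n (fun a =>
    negb ((fix ex (a' : nat) : bool :=
             match a' with
             | O => false
             | S k => orb (glb_relb gamma parts k a) (ex k)
             end) a)).

Definition block_const (n : nat) (part : nat -> nat) (Ft : nat -> nat -> R) : Prop :=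
  forall a b a' b', (a < n)%nat -> (b < n)%nat -> (a' < n)%nat -> (b' < n)%nat ->
    part a = part a' -> part b = part b' -> Ft a b = Ft a' b'.

Definition nnz (n : nat) (A : nat -> nat -> R) : nat :=
  (fix go (k : nat) : nat :=
     match k with
     | O => O
     | S k' => (go k' + ncount n (fun b => if Req_dec_T (A k' b) 0 then false else true))%nat
     end) n.

Definition degree (n : nat) (A : nat -> nat -> R) (a : nat) : R :=
  rsum n (fun j => A a j).

(* Parameter vectors p in R^(n+gamma): lambda_a = p a (a < n),
   mu_t = p (n + t) (t < gamma). *)
Definition dual_L (n gamma : nat) (A : nat -> nat -> R) (F : nat -> nat -> nat -> R)
  (p : nat -> R) : R :=
  rsum n (fun a => rsum n (fun b =>
     ln (1 + exp (p a + rsum gamma (fun t => p (n + t)%nat * F t a b)))))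
  - rsum n (fun a => degree n A a * p a)
  - rsum gamma (fun t =>
      rsum n (fun a => rsum n (fun b => F t a b * A a b)) * p (n + t)%nat).

Definition inW (n gamma : nat) (A : nat -> nat -> R) (parts : nat -> nat -> nat)
  (p : nat -> R) : Prop :=
  forall a a', (a < n)%nat -> (a' < n)%nat ->
    glb_rel gamma parts a a' -> degree n A a = degree n A a' -> p a = p a'.

(* Linear algebra in R^N, vectors = functions nat -> R looked at on indices < N. *)
Definition lin_indep (N k : nat) (v : nat -> nat -> R) : Prop :=
  forall c : nat -> R,
    (forall i, (i < N)%nat -> rsum k (fun j => c j * v j i) = 0) ->
    forall j, (j < k)%nat -> c j = 0.

Definition is_basis_of (N : nat) (S : (nat -> R) -> Prop) (k : nat)
  (v : nat -> nat -> R) : Prop :=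
  (forall j, (j < k)%nat -> S (v j)) /\
  lin_indep N k v /\
  (forall w, S w -> exists c : nat -> R,
     forall i, (i < N)%nat -> w i = rsum k (fun j => c j * v j i)).

Definition has_dim (N : nat) (S : (nat -> R) -> Prop) (k : nat) : Prop :=
  exists v, is_basis_of N S k v.

(* Averaging the lambda-coordinates of a parameter vector over the classes of the
   partition of V into the intersections of the parts of b with the level sets of the
   degree lands in W, keeps every mu-coordinate and the term sum_a d_a lambda_a, and cannot
   increase L: since every F_t is constant on blocks of b, the lambda-gradient of the
   softplus part at the averaged point is constant on classes, so the tangent inequality of
   the convex function log(1 + exp x) shows L(average) <= L.  Hence inf_W L = inf L and
   minimizers on W are global.
   W is spanned by the class indicators and the gamma mu-coordinates.  Inside a part of b the
   classes have pairwise distinct degrees >= 1, so a part split into D classes has total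
   degree >= D (D + 1) / 2; Cauchy-Schwarz over the |b| parts gives (#classes)^2 <= 2 |b| m. *)

From Stdlib Require Import Reals Lra Lia List Arith.
Open Scope R_scope.

Lemma rsum_ext n f g : (forall k, (k < n)%nat -> f k = g k) -> rsum n f = rsum n g.
Proof.
  induction n as [|n IH]; intros Hfg; simpl; [reflexivity|].
  rewrite IH, Hfg; auto with arith.
Qed.

Lemma rsum_plus n f g : rsum n (fun k => f k + g k) = rsum n f + rsum n g.
Proof. induction n as [|n IH]; simpl; [lra|]. rewrite IH; lra. Qed.

Lemma rsum_minus n f g : rsum n (fun k => f k - g k) = rsum n f - rsum n g.
Proof. induction n as [|n IH]; simpl; [lra|]. rewrite IH; lra. Qed.

Lemma rsum_scal_l n c f : rsum n (fun k => c * f k) = c * rsum n f.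
Proof. induction n as [|n IH]; simpl; [lra|]. rewrite IH; lra. Qed.

Lemma rsum_const_0 n : rsum n (fun _ => 0) = 0.
Proof. induction n as [|n IH]; simpl; [|rewrite IH]; lra. Qed.

Lemma rsum_swap n m f :
  rsum n (fun i => rsum m (fun j => f i j)) = rsum m (fun j => rsum n (fun i => f i j)).
Proof.
  induction n as [|n IH]; simpl.
  - symmetry; apply rsum_const_0.
  - rewrite IH, <- rsum_plus; reflexivity.
Qed.

Lemma rsum_le n f g : (forall k, (k < n)%nat -> f k <= g k) -> rsum n f <= rsum n g.
Proof.
  induction n as [|n IH]; intros Hfg; simpl; [lra|].
  apply Rplus_le_compat; auto with arith.
Qed.

Lemma rsum_nonneg n f : (forall k, (k < n)%nat -> 0 <= f k) -> 0 <= rsum n f.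
Proof.
  induction n as [|n IH]; intros Hf; simpl; [lra|].
  apply Rplus_le_le_0_compat; auto with arith.
Qed.

Lemma rsum_eq_0 n f : (forall k, (k < n)%nat -> f k = 0) -> rsum n f = 0.
Proof. intros Hf. rewrite (rsum_ext n f (fun _ => 0)) by auto. apply rsum_const_0. Qed.

Lemma rsum_single n f k0 :
  (k0 < n)%nat -> (forall k, (k < n)%nat -> k <> k0 -> f k = 0) -> rsum n f = f k0.
Proof.
  induction n as [|n IH]; intros Hk0 Hf; [lia|]. simpl.
  destruct (Nat.eq_dec k0 n) as [->|Hne].
  - rewrite rsum_eq_0; [lra|]. intros k Hk; apply Hf; lia.
  - rewrite IH, (Hf n); [lra|lia|congruence|lia|].
    intros k Hk; apply Hf; lia.
Qed.

Lemma rsum_split a b f : rsum (a + b) f = rsum a f + rsum b (fun t => f (a + t)%nat).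
Proof.
  induction b as [|b IH]; simpl; [rewrite Nat.add_0_r; lra|].
  rewrite Nat.add_succ_r; simpl. rewrite IH; lra.
Qed.

Lemma INR_ncount n P : INR (ncount n P) = rsum n (fun k => if P k then 1 else 0).
Proof.
  induction n as [|n IH]; simpl; [reflexivity|].
  rewrite plus_INR, IH. destruct (P n); reflexivity.
Qed.

Definition softplus (x : R) : R := ln (1 + exp x).
Definition logistic (x : R) : R := exp x / (1 + exp x).

Lemma softplus_derivable x : derivable_pt_lim softplus x (logistic x).
Proof.
  assert (H : derivable_pt_lim (comp ln (fct_cte 1 + exp)%F) x (/ (1 + exp x) * (0 + exp x))).
  { apply derivable_pt_lim_comp.
    - apply derivable_pt_lim_plus; [apply derivable_pt_lim_const | apply derivable_pt_lim_exp].
    - apply derivable_pt_lim_ln. unfold plus_fct, fct_cte. pose proof (exp_pos x); lra. }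
  unfold logistic.
  replace (exp x / (1 + exp x)) with (/ (1 + exp x) * (0 + exp x)) by (unfold Rdiv; ring).
  exact H.
Qed.

Lemma logistic_le x y : x <= y -> logistic x <= logistic y.
Proof.
  intros Hxy. unfold logistic. pose proof (exp_pos x). pose proof (exp_pos y).
  assert (exp x <= exp y) by (destruct Hxy; [left; apply exp_increasing | subst]; lra).
  apply (Rmult_le_reg_r ((1 + exp x) * (1 + exp y))); [nra|].
  field_simplify; lra.
Qed.

(* Convexity of softplus: the mean value theorem and the monotonicity of its derivative. *)
Lemma softplus_tangent x y : softplus x + logistic x * (y - x) <= softplus y.
Proof.
  destruct (Rtotal_order x y) as [Hlt|[->|Hgt]].
  - destruct (MVT_cor2 softplus logistic x y Hlt (fun c _ => softplus_derivable c)) as [c [Hc Hcxy]].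
    pose proof (logistic_le x c ltac:(lra)). nra.
  - lra.
  - destruct (MVT_cor2 softplus logistic y x Hgt (fun c _ => softplus_derivable c)) as [c [Hc Hcxy]].
    pose proof (logistic_le c x ltac:(lra)). nra.
Qed.

Record bool_equiv (E : nat -> nat -> bool) : Prop := {
  bool_equiv_refl : forall x, E x x = true;
  bool_equiv_sym : forall x y, E x y = E y x;
  bool_equiv_trans : forall x y z, E x y = true -> E y z = true -> E x z = true }.
Arguments bool_equiv_refl {E}.
Arguments bool_equiv_sym {E}.
Arguments bool_equiv_trans {E}.

(* Class leaders are the least elements of the classes; [glb_card] counts those of the
   glb partition. *)
Definition related_below (E : nat -> nat -> bool) (a : nat) : nat -> bool :=
  fix ex (k : nat) : bool := match k with O => false | S k' => orb (E k' a) (ex k') end.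

Definition class_leader (E : nat -> nat -> bool) (a : nat) : bool := negb (related_below E a a).

Definition class_constant (E : nat -> nat -> bool) (n : nat) (w : nat -> R) : Prop :=
  forall a a', (a < n)%nat -> (a' < n)%nat -> E a a' = true -> w a = w a'.

Definition class_avg (E : nat -> nat -> bool) (n : nat) (p : nat -> R) (i : nat) : R :=
  if (i <? n)%nat
  then rsum n (fun x => if E i x then p x else 0) / rsum n (fun x => if E i x then 1 else 0)
  else p i.

Section Classes.

Variable E : nat -> nat -> bool.
Hypothesis HE : bool_equiv E.

Lemma bool_equiv_row x y : E x y = true -> forall z, E x z = E y z.
Proof.
  intros Hxy z. destruct (E x z) eqn:Hxz, (E y z) eqn:Hyz; auto.
  - rewrite (bool_equiv_sym HE) in Hxy. rewrite (bool_equiv_trans HE _ _ _ Hxy Hxz) in Hyz. discriminate.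
  - rewrite (bool_equiv_trans HE _ _ _ Hxy Hyz) in Hxz. discriminate.
Qed.

Lemma related_below_spec a k :
  related_below E a k = true <-> exists k', (k' < k)%nat /\ E k' a = true.
Proof.
  induction k as [|k IH]; simpl.
  - split; [discriminate | intros [k' [Hk' _]]; lia].
  - rewrite Bool.orb_true_iff, IH. split.
    + intros [H|[k' [Hk' H]]]; [exists k | exists k']; split; auto; lia.
    + intros [k' [Hk' H]].
      destruct (Nat.eq_dec k' k) as [->|]; [auto | right; exists k'; split; auto; lia].
Qed.

Lemma class_leader_spec a : class_leader E a = true <-> forall k, (k < a)%nat -> E k a = false.
Proof.
  unfold class_leader. rewrite Bool.negb_true_iff, <- Bool.not_true_iff_false, related_below_spec.
  split.
  - intros Hnone k Hk. apply Bool.not_true_iff_false. intros Hka. eauto.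
  - intros Hnone [k [Hk Hka]]. rewrite Hnone in Hka; [discriminate|auto].
Qed.

Lemma class_leader_exists r : exists a, (a <= r)%nat /\ class_leader E a = true /\ E a r = true.
Proof.
  induction r as [r IH] using (well_founded_induction lt_wf).
  destruct (class_leader E r) eqn:Hr.
  - exists r. repeat split; auto. apply (bool_equiv_refl HE).
  - unfold class_leader in Hr. apply Bool.negb_false_iff, related_below_spec in Hr as [k [Hk Hkr]].
    destruct (IH k Hk) as [a [Ha [La Hak]]].
    exists a. repeat split; auto; [lia|]. exact (bool_equiv_trans HE _ _ _ Hak Hkr).
Qed.

Lemma class_leader_unique a b :
  class_leader E a = true -> class_leader E b = true -> E a b = true -> a = b.
Proof.
  intros Ha Hb Hab. rewrite class_leader_spec in Ha, Hb.
  destruct (lt_eq_lt_dec a b) as [[Hlt|Heq]|Hgt]; auto.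
  - rewrite Hb in Hab; [discriminate|auto].
  - rewrite (bool_equiv_sym HE), Ha in Hab; [discriminate|auto].
Qed.

Lemma rsum_leader_of n r : (r < n)%nat ->
  rsum n (fun a => if andb (class_leader E a) (E a r) then 1 else 0) = 1.
Proof.
  intros Hr. destruct (class_leader_exists r) as [a0 [Ha0 [La0 Ha0r]]].
  rewrite (rsum_single n _ a0); [rewrite La0, Ha0r; reflexivity | lia |].
  intros a Ha Hne. destruct (class_leader E a) eqn:La, (E a r) eqn:Har; auto. exfalso.
  apply Hne, class_leader_unique; auto.
  apply (bool_equiv_trans HE _ r); [auto | rewrite (bool_equiv_sym HE); auto].
Qed.

Lemma rsum_by_classes n f :
  rsum n f
  = rsum n (fun a => if class_leader E a then rsum n (fun r => if E a r then f r else 0) else 0).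
Proof.
  transitivity
    (rsum n (fun a => rsum n (fun r => (if andb (class_leader E a) (E a r) then 1 else 0) * f r))).
  - rewrite rsum_swap. apply rsum_ext. intros r Hr.
    transitivity (f r * rsum n (fun a => if andb (class_leader E a) (E a r) then 1 else 0)).
    + rewrite rsum_leader_of by exact Hr. ring.
    + rewrite <- rsum_scal_l. apply rsum_ext; intros; ring.
  - apply rsum_ext. intros a _. destruct (class_leader E a); simpl.
    + apply rsum_ext. intros r _. destruct (E a r); ring.
    + apply rsum_eq_0. intros r _. ring.
Qed.

Variable n : nat.

Lemma class_size_ge1 x : (x < n)%nat -> 1 <= rsum n (fun y => if E x y then 1 else 0).
Proof.
  intros Hx. transitivity (rsum n (fun y => if Nat.eqb y x then 1 else 0)).
  - rewrite (rsum_single n _ x Hx), Nat.eqb_refl; [lra|].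
    intros y _ Hy. apply Nat.eqb_neq in Hy. rewrite Hy; reflexivity.
  - apply rsum_le. intros y _.
    destruct (Nat.eqb_spec y x) as [->|]; [rewrite (bool_equiv_refl HE)|destruct (E x y)]; lra.
Qed.

Lemma class_avg_out p i : (n <= i)%nat -> class_avg E n p i = p i.
Proof.
  intros Hi. unfold class_avg.
  replace (i <? n)%nat with false; [reflexivity|]. symmetry; apply Nat.ltb_ge; auto.
Qed.

Lemma class_avg_class_constant p : class_constant E n (class_avg E n p).
Proof.
  intros a a' Ha Ha' Haa'. unfold class_avg.
  apply Nat.ltb_lt in Ha, Ha'. rewrite Ha, Ha'.
  f_equal; apply rsum_ext; intros x _; rewrite (bool_equiv_row a a' Haa' x); reflexivity.
Qed.

Lemma rsum_class_avg c p : class_constant E n c ->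
  rsum n (fun a => c a * class_avg E n p a) = rsum n (fun a => c a * p a).
Proof.
  intros Hc. set (size := fun a => rsum n (fun y => if E a y then 1 else 0)).
  transitivity (rsum n (fun a => rsum n (fun x => c a / size a * (if E a x then p x else 0)))).
  { apply rsum_ext. intros a Ha. rewrite rsum_scal_l. unfold class_avg, size.
    apply Nat.ltb_lt in Ha. rewrite Ha. unfold Rdiv. ring. }
  rewrite rsum_swap. apply rsum_ext. intros x Hx.
  transitivity (rsum n (fun a => c x / size x * p x * (if E x a then 1 else 0))).
  - apply rsum_ext. intros a Ha. rewrite (bool_equiv_sym HE a x).
    destruct (E x a) eqn:Hxa; [|ring].
    assert (size a = size x) as ->.
    { apply rsum_ext. intros y _. rewrite (bool_equiv_row x a Hxa y). reflexivity. }
    rewrite (Hc x a Hx Ha Hxa). ring.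
  - rewrite rsum_scal_l. pose proof (class_size_ge1 x Hx). unfold size. field. lra.
Qed.

End Classes.

Definition mu_field (n gamma : nat) (F : nat -> nat -> nat -> R) (p : nat -> R) (a b : nat) : R :=
  rsum gamma (fun t => p (n + t)%nat * F t a b).

Lemma dual_L_lambda_tangent n gamma A F p q :
  (forall t, q (n + t)%nat = p (n + t)%nat) ->
  dual_L n gamma A F q
  + rsum n (fun a => (rsum n (fun b => logistic (q a + mu_field n gamma F q a b)) - degree n A a)
                     * (p a - q a))
  <= dual_L n gamma A F p.
Proof.
  intros Hmu.
  assert (Hfield : forall a b, mu_field n gamma F q a b = mu_field n gamma F p a b).
  { intros a b. apply rsum_ext. intros t _. rewrite Hmu. reflexivity. }
  set (s := mu_field n gamma F p).
  assert (Htangent :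
    rsum n (fun a => rsum n (fun b => softplus (q a + s a b)))
    + rsum n (fun a => rsum n (fun b => logistic (q a + s a b) * (p a - q a)))
    <= rsum n (fun a => rsum n (fun b => softplus (p a + s a b)))).
  { rewrite <- rsum_plus. apply rsum_le. intros a _. rewrite <- rsum_plus. apply rsum_le. intros b _.
    pose proof (softplus_tangent (q a + s a b) (p a + s a b)) as Hab.
    replace (p a + s a b - (q a + s a b)) with (p a - q a) in Hab by ring. exact Hab. }
  assert (Hlinear :
    rsum n (fun a => (rsum n (fun b => logistic (q a + mu_field n gamma F q a b)) - degree n A a)
                     * (p a - q a))
    = rsum n (fun a => rsum n (fun b => logistic (q a + s a b) * (p a - q a)))
      - rsum n (fun a => degree n A a * p a) + rsum n (fun a => degree n A a * q a)).
  { rewrite <- rsum_minus, <- rsum_plus. apply rsum_ext. intros a _.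
    rewrite Rmult_comm, Rmult_minus_distr_l, <- rsum_scal_l.
    rewrite (rsum_ext n (fun b => (p a - q a) * logistic (q a + mu_field n gamma F q a b))
                        (fun b => logistic (q a + s a b) * (p a - q a)))
      by (intros b _; rewrite Hfield; apply Rmult_comm).
    ring. }
  assert (Hcoupling :
    rsum gamma (fun t => rsum n (fun a => rsum n (fun b => F t a b * A a b)) * q (n + t)%nat)
    = rsum gamma (fun t => rsum n (fun a => rsum n (fun b => F t a b * A a b)) * p (n + t)%nat)).
  { apply rsum_ext. intros t _. rewrite Hmu. reflexivity. }
  assert (Hsoftplus_q :
    rsum n (fun a => rsum n (fun b => ln (1 + exp (q a + rsum gamma (fun t => q (n + t)%nat * F t a b)))))
    = rsum n (fun a => rsum n (fun b => softplus (q a + s a b)))).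
  { apply rsum_ext. intros a _. apply rsum_ext. intros b _.
    unfold s; rewrite <- Hfield. reflexivity. }
  unfold dual_L. rewrite Hlinear, Hcoupling, Hsoftplus_q.
  unfold s, mu_field, softplus in *. lra.
Qed.

Lemma dual_L_class_avg_le n gamma A F E p : bool_equiv E ->
  (forall t a a' b, (t < gamma)%nat -> (a < n)%nat -> (a' < n)%nat -> (b < n)%nat ->
     E a a' = true -> F t a b = F t a' b) ->
  class_constant E n (degree n A) ->
  dual_L n gamma A F (class_avg E n p) <= dual_L n gamma A F p.
Proof.
  intros HE HF Hdeg. set (q := class_avg E n p).
  assert (Hmu : forall t, q (n + t)%nat = p (n + t)%nat) by (intros t; apply class_avg_out; lia).
  set (c := fun a => rsum n (fun b => logistic (q a + mu_field n gamma F q a b)) - degree n A a).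
  assert (Hc : class_constant E n c).
  { intros a a' Ha Ha' Haa'. unfold c. rewrite (Hdeg a a' Ha Ha' Haa').
    f_equal. apply rsum_ext. intros b Hb.
    unfold q. rewrite (class_avg_class_constant E HE n p a a' Ha Ha' Haa'). f_equal. f_equal.
    apply rsum_ext. intros t Ht. rewrite (HF t a a' b); auto. }
  assert (Hzero : rsum n (fun a => c a * (p a - q a)) = 0).
  { rewrite (rsum_ext n _ (fun a => c a * p a - c a * q a)) by (intros; ring).
    rewrite rsum_minus. unfold q. rewrite rsum_class_avg; auto. lra. }
  pose proof (dual_L_lambda_tangent n gamma A F p q Hmu) as Htangent.
  unfold c in Hzero. lra.
Qed.

Lemma ncount_enum n P : exists f : nat -> nat,
  (forall j, (j < ncount n P)%nat -> (f j < n)%nat /\ P (f j) = true) /\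
  (forall j j', (j < ncount n P)%nat -> (j' < ncount n P)%nat -> f j = f j' -> j = j') /\
  (forall i, (i < n)%nat -> P i = true -> exists j, (j < ncount n P)%nat /\ f j = i).
Proof.
  set (l := filter P (seq 0 n)).
  assert (Hlen : length l = ncount n P).
  { unfold l. induction n as [|n IH]; [reflexivity|].
    rewrite seq_S, filter_app, length_app, IH. simpl. destruct (P n); simpl; lia. }
  rewrite <- Hlen. exists (fun j => nth j l 0%nat). split; [|split].
  - intros j Hj. apply (nth_In l 0%nat), filter_In in Hj as [Hseq HP].
    apply in_seq in Hseq. split; [lia|exact HP].
  - apply NoDup_nth, NoDup_filter, seq_NoDup.
  - intros i Hi HP. apply In_nth.
    apply filter_In. split; [apply in_seq; lia | exact HP].
Qed.

Lemma has_dim_ext N (S S' : (nat -> R) -> Prop) k :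
  (forall w, S w <-> S' w) -> has_dim N S k -> has_dim N S' k.
Proof.
  intros HSS' [v [Hv [Hindep Hspan]]]. exists v. split; [|split]; auto.
  - intros j Hj. apply HSS', Hv, Hj.
  - intros w Hw. apply Hspan, HSS', Hw.
Qed.

(* The basis consists of the indicator vectors of the classes (indexed by their leaders)
   followed by the unit vectors of the last [gamma] coordinates. *)
Lemma has_dim_class_constant n gamma E : bool_equiv E ->
  has_dim (n + gamma) (class_constant E n) (ncount n (class_leader E) + gamma).
Proof.
  intros HE. set (K := ncount n (class_leader E)).
  destruct (ncount_enum n (class_leader E)) as [rep [Hrep [Hrep_inj Hrep_onto]]].
  fold K in Hrep, Hrep_inj, Hrep_onto.
  assert (Hclass : forall i, (i < n)%nat -> exists j, (j < K)%nat /\ E (rep j) i = true).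
  { intros i Hi. destruct (class_leader_exists E HE i) as [a [Ha [La Hai]]].
    destruct (Hrep_onto a ltac:(lia) La) as [j [Hj <-]]. eauto. }
  assert (Hclass_unique : forall i j j', (j < K)%nat -> (j' < K)%nat ->
            E (rep j) i = true -> E (rep j') i = true -> j = j').
  { intros i j j' Hj Hj' Hji Hj'i. apply Hrep_inj; auto.
    apply (class_leader_unique E HE); [apply Hrep, Hj | apply Hrep, Hj'|].
    apply (bool_equiv_trans HE _ i); [auto | rewrite (bool_equiv_sym HE); auto]. }
  set (v := fun j i =>
    if (j <? K)%nat then (if andb (i <? n)%nat (E (rep j) i) then 1 else 0)
    else (if (i =? n + (j - K))%nat then 1 else 0)).
  assert (Hcoord_class : forall c i j0, (i < n)%nat -> (j0 < K)%nat -> E (rep j0) i = true ->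
            rsum (K + gamma) (fun j => c j * v j i) = c j0).
  { intros c i j0 Hi Hj0 Hj0i. rewrite rsum_split, (rsum_eq_0 gamma).
    2:{ intros t _. unfold v. replace (K + t <? K)%nat with false by (symmetry; apply Nat.ltb_ge; lia).
        replace (i =? n + (K + t - K))%nat with false by (symmetry; apply Nat.eqb_neq; lia). ring. }
    assert (Hin : (i <? n)%nat = true) by (apply Nat.ltb_lt; exact Hi).
    rewrite (rsum_single K _ j0 Hj0).
    - unfold v. replace (j0 <? K)%nat with true by (symmetry; apply Nat.ltb_lt; lia).
      rewrite Hin, Hj0i; simpl; ring.
    - intros j Hj Hne. unfold v. replace (j <? K)%nat with true by (symmetry; apply Nat.ltb_lt; lia).
      rewrite Hin. destruct (E (rep j) i) eqn:Hji; [|simpl; ring].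
      exfalso. apply Hne. apply (Hclass_unique i); auto. }
  assert (Hcoord_mu : forall c i, (n <= i < n + gamma)%nat ->
            rsum (K + gamma) (fun j => c j * v j i) = c (K + (i - n))%nat).
  { intros c i Hi. rewrite rsum_split, (rsum_eq_0 K).
    2:{ intros j Hj. unfold v. replace (j <? K)%nat with true by (symmetry; apply Nat.ltb_lt; lia).
        replace (i <? n)%nat with false by (symmetry; apply Nat.ltb_ge; lia). simpl. ring. }
    rewrite (rsum_single gamma _ (i - n)%nat ltac:(lia)).
    - unfold v. replace (K + (i - n) <? K)%nat with false by (symmetry; apply Nat.ltb_ge; lia).
      replace (i =? n + (K + (i - n) - K))%nat with true by (symmetry; apply Nat.eqb_eq; lia). ring.
    - intros t _ Hne. unfold v. replace (K + t <? K)%nat with false by (symmetry; apply Nat.ltb_ge; lia).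
      replace (i =? n + (K + t - K))%nat with false by (symmetry; apply Nat.eqb_neq; lia). ring. }
  exists v. split; [|split].
  - intros j _ a a' Ha Ha' Haa'. unfold v.
    replace (a <? n)%nat with true by (symmetry; apply Nat.ltb_lt; lia).
    replace (a' <? n)%nat with true by (symmetry; apply Nat.ltb_lt; lia).
    destruct (j <? K)%nat.
    + rewrite (bool_equiv_sym HE _ a), (bool_equiv_sym HE _ a'), (bool_equiv_row E HE a a' Haa'). reflexivity.
    + replace (a =? n + (j - K))%nat with false by (symmetry; apply Nat.eqb_neq; lia).
      replace (a' =? n + (j - K))%nat with false by (symmetry; apply Nat.eqb_neq; lia). reflexivity.
  - intros c Hc j Hj. destruct (Nat.ltb_spec j K) as [HjK|HjK].
    + destruct (Hrep j HjK) as [Hrepj _].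
      specialize (Hc (rep j) ltac:(lia)). rewrite (Hcoord_class c (rep j) j) in Hc; auto.
      apply (bool_equiv_refl HE).
    + specialize (Hc (n + (j - K))%nat ltac:(lia)). rewrite Hcoord_mu in Hc by lia.
      replace (K + (n + (j - K) - n))%nat with j in Hc by lia. exact Hc.
  - intros w Hw. exists (fun j => if (j <? K)%nat then w (rep j) else w (n + (j - K))%nat).
    intros i Hi. destruct (Nat.ltb_spec i n) as [Hin|Hin].
    + destruct (Hclass i Hin) as [j0 [Hj0 Hj0i]]. rewrite (Hcoord_class _ i j0); auto.
      replace (j0 <? K)%nat with true by (symmetry; apply Nat.ltb_lt; lia).
      destruct (Hrep j0 Hj0) as [Hrepj0 _]. symmetry. apply Hw; auto.
    + rewrite Hcoord_mu by lia. replace (K + (i - n) <? K)%nat with false by (symmetry; apply Nat.ltb_ge; lia).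
      f_equal. lia.
Qed.

Lemma rsum_cauchy_schwarz n u v :
  rsum n (fun k => u k * v k) * rsum n (fun k => u k * v k)
  <= rsum n (fun k => u k * u k) * rsum n (fun k => v k * v k).
Proof.
  induction n as [|n IH]; simpl; [lra|].
  assert (0 <= rsum n (fun k => u k * u k)) by (apply rsum_nonneg; intros; nra).
  assert (0 <= rsum n (fun k => v k * v k)) by (apply rsum_nonneg; intros; nra).
  set (S := rsum n (fun k => u k * v k)) in *.
  set (Su := rsum n (fun k => u k * u k)) in *.
  set (Sv := rsum n (fun k => v k * v k)) in *.
  (* [2 S x y <= Su y^2 + Sv x^2] follows from [S^2 <= Su Sv] by AM-GM. *)
  assert (Hcross : 2 * S * (u n * v n) <= Su * (v n * v n) + Sv * (u n * u n)).
  { assert (Hsq : (2 * S * (u n * v n)) * (2 * S * (u n * v n))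
                  <= (Su * (v n * v n) + Sv * (u n * u n)) * (Su * (v n * v n) + Sv * (u n * u n))).
    { assert (S * S * ((u n * v n) * (u n * v n)) <= Su * Sv * ((u n * v n) * (u n * v n)))
        by (apply Rmult_le_compat_r; nra).
      pose proof (Rle_0_sqr (Su * (v n * v n) - Sv * (u n * u n))). unfold Rsqr in *. nra. }
    assert (0 <= Su * (v n * v n) + Sv * (u n * u n))
      by (apply Rplus_le_le_0_compat; apply Rmult_le_pos; nra).
    apply Rsqr_le_abs_0 in Hsq. rewrite (Rabs_pos_eq (_ + _)) in Hsq by assumption.
    eapply Rle_trans; [apply RRle_abs|exact Hsq]. }
  nra.
Qed.

Lemma rsum_indicator_at_most_one n (P : nat -> bool) :
  (forall x y, (x < n)%nat -> (y < n)%nat -> P x = true -> P y = true -> x = y) ->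
  rsum n (fun k => if P k then 1 else 0) = 0 \/ rsum n (fun k => if P k then 1 else 0) = 1.
Proof.
  induction n as [|n IH]; intros Hone; simpl; [left; reflexivity|].
  destruct (P n) eqn:HPn.
  - right. rewrite rsum_eq_0; [lra|]. intros k Hk. destruct (P k) eqn:HPk; auto.
    specialize (Hone k n ltac:(lia) ltac:(lia) HPk HPn). lia.
  - rewrite Rplus_0_r. apply IH. intros x y Hx Hy. apply Hone; lia.
Qed.

Lemma nat_fun_bounded n (d : nat -> nat) : exists M, forall r, (r < n)%nat -> (d r <= M)%nat.
Proof.
  induction n as [|n [M HM]]; [exists O; intros; lia|].
  exists (Nat.max M (d n)). intros r Hr.
  destruct (Nat.eq_dec r n) as [->|]; [lia|]. specialize (HM r ltac:(lia)). lia.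
Qed.

(* [c] distinct positive integers sum to at least [1 + ... + c]: induction on a bound [M]
   for the values, since at most one of them equals [M + 1]. *)
Lemma rsum_distinct_pos n (P : nat -> bool) (d : nat -> nat) :
  (forall r, (r < n)%nat -> P r = true -> (1 <= d r)%nat) ->
  (forall r r', (r < n)%nat -> (r' < n)%nat -> P r = true -> P r' = true -> d r = d r' -> r = r') ->
  rsum n (fun r => if P r then 1 else 0) * (rsum n (fun r => if P r then 1 else 0) + 1)
  <= 2 * rsum n (fun r => if P r then INR (d r) else 0).
Proof.
  intros Hpos Hinj.
  set (cnt := fun M => rsum n (fun r => if andb (P r) (d r <=? M)%nat then 1 else 0)).
  set (tot := fun M => rsum n (fun r => if andb (P r) (d r <=? M)%nat then INR (d r) else 0)).
  assert (Hbelow : forall M, cnt M <= INR M /\ cnt M * (cnt M + 1) <= 2 * tot M).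
  { induction M as [|M [IHc IHt]].
    - assert (Hcnt0 : cnt O = 0).
      { apply rsum_eq_0. intros r Hr. destruct (P r) eqn:HPr; [|reflexivity].
        specialize (Hpos r Hr HPr). replace (d r <=? 0)%nat with false by (symmetry; apply Nat.leb_gt; lia).
        reflexivity. }
      rewrite Hcnt0. simpl. split; [lra|].
      assert (0 <= tot O); [|lra].
      apply rsum_nonneg. intros r _. destruct (andb _ _); [apply pos_INR|lra].
    - set (top := rsum n (fun r => if andb (P r) (d r =? S M)%nat then 1 else 0)).
      assert (Htop : top = 0 \/ top = 1).
      { apply rsum_indicator_at_most_one. intros x y Hx Hy Hxt Hyt.
        apply Bool.andb_true_iff in Hxt as [HPx Hdx], Hyt as [HPy Hdy].
        apply Nat.eqb_eq in Hdx, Hdy. apply Hinj; auto; lia. }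
      assert (Hcnt : cnt (S M) = cnt M + top).
      { unfold cnt, top. rewrite <- rsum_plus. apply rsum_ext. intros r _.
        destruct (P r); cbn [andb]; [|lra].
        destruct (Nat.leb_spec (d r) (S M)), (Nat.leb_spec (d r) M), (Nat.eqb_spec (d r) (S M));
          cbv iota; first [lia | lra]. }
      assert (Htot : tot (S M) = tot M + INR (S M) * top).
      { unfold tot, top. rewrite <- rsum_scal_l, <- rsum_plus. apply rsum_ext. intros r _.
        destruct (P r); cbn [andb]; [|lra].
        destruct (Nat.leb_spec (d r) (S M)), (Nat.leb_spec (d r) M), (Nat.eqb_spec (d r) (S M)) as [Hdr|];
          cbv iota; try lia; try lra. rewrite Hdr. lra. }
      rewrite Hcnt, Htot, S_INR. destruct Htop as [-> | ->]; split; nra. }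
  destruct (nat_fun_bounded n d) as [B HB]. destruct (Hbelow B) as [_ HcntB].
  assert (Hall : forall r, (r < n)%nat -> andb (P r) (d r <=? B)%nat = P r).
  { intros r Hr. destruct (P r); [apply Nat.leb_le, HB, Hr | reflexivity]. }
  unfold cnt, tot in HcntB.
  rewrite !(rsum_ext n (fun r => if andb (P r) (d r <=? B)%nat then _ else 0) (fun r => if P r then _ else 0))
    in HcntB by (intros r Hr; rewrite Hall; auto).
  exact HcntB.
Qed.

Lemma ncount_classes_sq_le n (E G : nat -> nat -> bool) (d : nat -> nat) :
  bool_equiv E -> bool_equiv G ->
  (forall a a', (a < n)%nat -> (a' < n)%nat -> G a a' = true -> d a = d a' -> E a a' = true) ->
  (forall a, (a < n)%nat -> (1 <= d a)%nat) ->
  INR (ncount n (class_leader E)) * INR (ncount n (class_leader E))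
  <= INR (ncount n (class_leader G)) * (2 * rsum n (fun a => INR (d a))).
Proof.
  intros HE HG Hsplit Hpos.
  set (LG := class_leader G).
  set (D := fun a => rsum n (fun r => if andb (G a r) (class_leader E r) then 1 else 0)).
  set (deg_class := fun a => rsum n (fun r => if G a r then INR (d r) else 0)).
  assert (HK : INR (ncount n (class_leader E)) = rsum n (fun a => if LG a then D a else 0)).
  { rewrite INR_ncount, (rsum_by_classes G HG). fold LG. apply rsum_ext. intros a _.
    destruct (LG a); [|reflexivity]. apply rsum_ext. intros r _. destruct (G a r); reflexivity. }
  assert (Hdeg : rsum n (fun a => INR (d a)) = rsum n (fun a => if LG a then deg_class a else 0))
    by apply (rsum_by_classes G HG).
  assert (HD : forall a, D a * D a <= 2 * deg_class a).
  { intros a.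
    assert (0 <= D a) by (apply rsum_nonneg; intros r _; destruct (andb _ _); lra).
    assert (D a * (D a + 1) <= 2 * rsum n (fun r => if andb (G a r) (class_leader E r) then INR (d r) else 0)).
    { apply rsum_distinct_pos.
      - intros r Hr _. apply Hpos, Hr.
      - intros r r' Hr Hr' Hleader Hleader' Hdd.
        apply Bool.andb_true_iff in Hleader as [Har Lr], Hleader' as [Har' Lr'].
        apply (class_leader_unique E HE); auto. apply Hsplit; auto.
        apply (bool_equiv_trans HG _ a); [rewrite (bool_equiv_sym HG); auto | auto]. }
    assert (rsum n (fun r => if andb (G a r) (class_leader E r) then INR (d r) else 0) <= deg_class a).
    { apply rsum_le. intros r _. destruct (G a r), (class_leader E r); simpl; try lra. apply pos_INR. }
    nra. }
  pose proof (rsum_cauchy_schwarz n (fun a => if LG a then 1 else 0) (fun a => if LG a then D a else 0))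
    as Hcs. cbv beta in Hcs.
  rewrite (rsum_ext n (fun k => (if LG k then 1 else 0) * (if LG k then D k else 0))
                      (fun a => if LG a then D a else 0)) in Hcs by (intros k _; destruct (LG k); ring).
  rewrite (rsum_ext n (fun k => (if LG k then 1 else 0) * (if LG k then 1 else 0))
                      (fun a => if LG a then 1 else 0)) in Hcs by (intros k _; destruct (LG k); ring).
  rewrite <- INR_ncount, <- HK in Hcs. eapply Rle_trans; [exact Hcs|].
  apply Rmult_le_compat_l; [apply pos_INR|].
  rewrite Hdeg, <- rsum_scal_l. apply rsum_le. intros a _. destruct (LG a); [apply HD|lra].
Qed.

Lemma glb_relb_spec gamma parts a a' : glb_relb gamma parts a a' = true <-> glb_rel gamma parts a a'.
Proof.
  unfold glb_relb, glb_rel. induction gamma as [|gamma IH]; simpl.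
  - split; [intros _ t Ht; lia | reflexivity].
  - rewrite Bool.andb_true_iff, IH, Nat.eqb_eq. split.
    + intros [Hlast Hrest] t Ht. destruct (Nat.eq_dec t gamma) as [->|]; [auto | apply Hrest; lia].
    + intros Hall. split; [apply Hall; lia | intros t Ht; apply Hall; lia].
Qed.

Lemma bool_equiv_glb_relb gamma parts : bool_equiv (glb_relb gamma parts).
Proof.
  split.
  - intros x. apply glb_relb_spec. intros t _. reflexivity.
  - intros x y. apply Bool.eq_iff_eq_true. rewrite !glb_relb_spec.
    split; intros H t Ht; symmetry; apply H, Ht.
  - intros x y z. rewrite !glb_relb_spec. intros Hxy Hyz t Ht. rewrite (Hxy t Ht). apply Hyz, Ht.
Qed.

Definition eq_valb (f : nat -> R) (a b : nat) : bool := if Req_dec_T (f a) (f b) then true else false.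

Lemma eq_valb_spec f a b : eq_valb f a b = true <-> f a = f b.
Proof. unfold eq_valb. destruct (Req_dec_T (f a) (f b)); split; congruence. Qed.

Lemma bool_equiv_eq_valb f : bool_equiv (eq_valb f).
Proof.
  split.
  - intros x. apply eq_valb_spec. reflexivity.
  - intros x y. apply Bool.eq_iff_eq_true. rewrite !eq_valb_spec. split; auto.
  - intros x y z. rewrite !eq_valb_spec. congruence.
Qed.

Lemma bool_equiv_andb E1 E2 : bool_equiv E1 -> bool_equiv E2 ->
  bool_equiv (fun a b => andb (E1 a b) (E2 a b)).
Proof.
  intros H1 H2. split.
  - intros x. rewrite (bool_equiv_refl H1), (bool_equiv_refl H2). reflexivity.
  - intros x y. rewrite (bool_equiv_sym H1), (bool_equiv_sym H2). reflexivity.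
  - intros x y z Hxy Hyz. apply Bool.andb_true_iff in Hxy as [Hxy1 Hxy2], Hyz as [Hyz1 Hyz2].
    rewrite (bool_equiv_trans H1 _ _ _ Hxy1 Hyz1), (bool_equiv_trans H2 _ _ _ Hxy2 Hyz2). reflexivity.
Qed.

Definition deg_glb_relb (n gamma : nat) (A : nat -> nat -> R) (parts : nat -> nat -> nat)
  (a a' : nat) : bool :=
  andb (glb_relb gamma parts a a') (eq_valb (degree n A) a a').

Lemma bool_equiv_deg_glb_relb n gamma A parts : bool_equiv (deg_glb_relb n gamma A parts).
Proof. apply bool_equiv_andb; [apply bool_equiv_glb_relb | apply bool_equiv_eq_valb]. Qed.

Lemma inW_class_constant n gamma A parts w :
  inW n gamma A parts w <-> class_constant (deg_glb_relb n gamma A parts) n w.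
Proof.
  unfold inW, class_constant, deg_glb_relb.
  setoid_rewrite Bool.andb_true_iff. setoid_rewrite glb_relb_spec. setoid_rewrite eq_valb_spec.
  split; intros Hw a a' Ha Ha'; [intros [Hglb Hdeg] | intros Hglb Hdeg]; apply Hw; auto.
Qed.

Definition row_nnz (n : nat) (A : nat -> nat -> R) (a : nat) : nat :=
  ncount n (fun b => if Req_dec_T (A a b) 0 then false else true).

Lemma INR_nnz n A : INR (nnz n A) = rsum n (fun a => INR (row_nnz n A a)).
Proof.
  unfold nnz, row_nnz.
  set (row := fun a => ncount n (fun b => if Req_dec_T (A a b) 0 then false else true)).
  assert (Hprefix : forall k,
    INR ((fix go (k : nat) : nat := match k with O => O | S k' => (go k' + row k')%nat end) k)
    = rsum k (fun a => INR (row a))).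
  { induction k as [|k IH]; simpl; [reflexivity|]. rewrite plus_INR, IH. reflexivity. }
  apply Hprefix.
Qed.

Lemma degree_row_nnz n A a : (forall b, (b < n)%nat -> A a b = 0 \/ A a b = 1) ->
  degree n A a = INR (row_nnz n A a).
Proof.
  intros H01. unfold degree, row_nnz. rewrite INR_ncount. apply rsum_ext. intros b Hb.
  destruct (Req_dec_T (A a b) 0) as [->|Hne]; [reflexivity|].
  destruct (H01 b Hb); [contradiction | assumption].
Qed.

Lemma ncount_pos n P b : (b < n)%nat -> P b = true -> (1 <= ncount n P)%nat.
Proof.
  induction n as [|n IH]; intros Hb HPb; [lia|]. simpl.
  destruct (Nat.eq_dec b n) as [->|]; [rewrite HPb; lia | specialize (IH ltac:(lia) HPb); lia].
Qed.

Lemma ncount_deg_glb_classes_le n gamma A parts :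
  (forall a b, (a < n)%nat -> (b < n)%nat -> A a b = 0 \/ A a b = 1) ->
  (forall a, (a < n)%nat -> exists b, (b < n)%nat /\ A a b <> 0) ->
  INR (ncount n (class_leader (deg_glb_relb n gamma A parts)))
  <= sqrt (2 * INR (glb_card n gamma parts) * INR (nnz n A)).
Proof.
  intros H01 Hrow.
  assert (Hsplit : forall a a', (a < n)%nat -> (a' < n)%nat -> glb_relb gamma parts a a' = true ->
            row_nnz n A a = row_nnz n A a' -> deg_glb_relb n gamma A parts a a' = true).
  { intros a a' Ha Ha' Hglb Hrow_eq. unfold deg_glb_relb. rewrite Hglb. apply eq_valb_spec.
    rewrite !degree_row_nnz, Hrow_eq; auto. }
  assert (Hpos : forall a, (a < n)%nat -> (1 <= row_nnz n A a)%nat).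
  { intros a Ha. destruct (Hrow a Ha) as [b [Hb Hab]]. apply (ncount_pos n _ b Hb).
    destruct (Req_dec_T (A a b) 0); [contradiction | reflexivity]. }
  pose proof (ncount_classes_sq_le n _ _ _ (bool_equiv_deg_glb_relb n gamma A parts)
                (bool_equiv_glb_relb gamma parts) Hsplit Hpos) as Hsq.
  rewrite <- INR_nnz in Hsq.
  rewrite <- (sqrt_square (INR (ncount n (class_leader (deg_glb_relb n gamma A parts))))) by apply pos_INR.
  apply sqrt_le_1_alt.
  change (glb_card n gamma parts) with (ncount n (class_leader (glb_relb gamma parts))). lra.
Qed.

Theorem mainTheorem3
  (n m gamma : nat) (A : nat -> nat -> R)
  (F : nat -> nat -> nat -> R) (parts : nat -> nat -> nat)
  (hA01 : forall a b, (a < n)%nat -> (b < n)%nat -> A a b = 0 \/ A a b = 1)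
  (hAsym : forall a b, (a < n)%nat -> (b < n)%nat -> A a b = A b a)
  (hm : m = nnz n A)
  (hrow : forall a, (a < n)%nat -> exists b, (b < n)%nat /\ A a b <> 0)
  (hFsym : forall t a b, (t < gamma)%nat -> (a < n)%nat -> (b < n)%nat ->
             F t a b = F t b a)
  (hFblock : forall t, (t < gamma)%nat -> block_const n (parts t) (F t)) :
  (exists k, has_dim (n + gamma) (inW n gamma A parts) k /\
     INR k <= sqrt (2 * INR (glb_card n gamma parts) * INR m) + INR gamma) /\
  (forall r : R,
     (forall p, inW n gamma A parts p -> r <= dual_L n gamma A F p) <->
     (forall p, r <= dual_L n gamma A F p)) /\
  (forall p, inW n gamma A parts p ->
     (forall q, inW n gamma A parts q -> dual_L n gamma A F p <= dual_L n gamma A F q) ->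
     forall q, dual_L n gamma A F p <= dual_L n gamma A F q).
Proof.
  set (E := deg_glb_relb n gamma A parts).
  pose proof (bool_equiv_deg_glb_relb n gamma A parts) as HE.
  assert (Hproject : forall p, inW n gamma A parts (class_avg E n p)
                               /\ dual_L n gamma A F (class_avg E n p) <= dual_L n gamma A F p).
  { intros p. split.
    - apply inW_class_constant, class_avg_class_constant, HE.
    - apply dual_L_class_avg_le; [exact HE | |].
      + intros t a a' b Ht Ha Ha' Hb Haa'. apply Bool.andb_true_iff in Haa' as [Hglb _].
        apply glb_relb_spec in Hglb. apply (hFblock t Ht); auto.
      + intros a a' Ha Ha' Haa'. apply Bool.andb_true_iff in Haa' as [_ Hdeg].
        apply eq_valb_spec, Hdeg. }
  split; [|split].
  - exists (ncount n (class_leader E) + gamma)%nat. split.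
    + apply (has_dim_ext _ (class_constant E n)); [intros w; symmetry; apply inW_class_constant|].
      apply has_dim_class_constant, HE.
    + rewrite plus_INR, hm. apply Rplus_le_compat_r, ncount_deg_glb_classes_le; assumption.
  - intros r. split; [|auto].
    intros Hr p. destruct (Hproject p) as [HW Hle]. specialize (Hr _ HW). lra.
  - intros p _ Hmin q. destruct (Hproject q) as [HW Hle]. specialize (Hmin _ HW). lra.
Qed.
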